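(* Let $(X,d_X)$ and $(Y,d_Y)$ be metric spaces. Every distance-increasing, partial distance-preserving metric $d$ on $X\times Y$ induces the product topology on $X\times Y$.
   Context: A metric $d$ on $X\times Y$ is distance-increasing if $d((x_1,y_1),(x_2,y_2))\le d((x_3,y_3),(x_4,y_4))$ whenever $d_X(x_1,x_2)\le d_X(x_3,x_4)$ and $d_Y(y_1,y_2)\le d_Y(y_3,y_4)$; it is partial distance-preserving if $d((x_1,y),(x_2,y))=d_X(x_1,x_2)$ and $d((x,y_1),(x,y_2))=d_Y(y_1,y_2)$ for all $x,x_1,x_2\in X$, $y,y_1,y_2\in Y$. *)

From Stdlib Require Import Reals.
Open Scope R_scope.

Definition is_metric {T : Type} (d : T -> T -> R) : Prop :=
  (forall x y, 0 <= d x y) /\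
  (forall x y, d x y = 0 <-> x = y) /\
  (forall x y, d x y = d y x) /\
  (forall x y z, d x z <= d x y + d y z).

Definition metric_open {T : Type} (d : T -> T -> R) (U : T -> Prop) : Prop :=
  forall x, U x -> exists eps, 0 < eps /\ forall y, d x y < eps -> U y.

(* Open sets of the product topology on X * Y, where X and Y carry the
   metric topologies of dX and dY: the topology generated by the basis of
   open rectangles U x V, i.e. W is open iff every point of W lies in an
   open rectangle contained in W. *)
Definition product_open {X Y : Type} (dX : X -> X -> R) (dY : Y -> Y -> R)
  (W : X * Y -> Prop) : Prop :=
  forall p, W p -> exists (U : X -> Prop) (V : Y -> Prop),
    metric_open dX U /\ metric_open dY V /\ U (fst p) /\ V (snd p) /\
    (forall x y, U x -> V y -> W (x, y)).

Definition distance_increasing {X Y : Type} (dX : X -> X -> R) (dY : Y -> Y -> R)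
  (d : X * Y -> X * Y -> R) : Prop :=
  forall x1 x2 x3 x4 y1 y2 y3 y4,
    dX x1 x2 <= dX x3 x4 -> dY y1 y2 <= dY y3 y4 ->
    d (x1, y1) (x2, y2) <= d (x3, y3) (x4, y4).

Definition partial_distance_preserving {X Y : Type} (dX : X -> X -> R)
  (dY : Y -> Y -> R) (d : X * Y -> X * Y -> R) : Prop :=
  (forall x1 x2 y, d (x1, y) (x2, y) = dX x1 x2) /\
  (forall x y1 y2, d (x, y1) (x, y2) = dY y1 y2).

(* The metric d on X * Y is squeezed between the two
   coordinate distances and their sum:
     max (dX x x') (dY y y')  <=  d ((x,y),(x',y'))  <=  dX x x' + dY y y'.
   The upper bound follows from the triangle inequality through the corner
   point (x',y) together with partial distance preservation; the lower bound
   compares the pair (x,x'),(y,y) with (x,x'),(y,y') via the distance-increasing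
   property, using dY y y = 0 <= dY y y' (and symmetrically).
   Consequently a d-ball of radius eps contains the rectangle of two balls of
   radius eps/2, so d-open sets are product-open; and a d-ball of radius
   min e1 e2 lies inside the rectangle of balls of radii e1 and e2, so
   product-open sets are d-open. *)

From Stdlib Require Import Reals Lra.
Open Scope R_scope.

Lemma metric_refl {T : Type} (d : T -> T -> R) (x : T) :
  is_metric d -> d x x = 0.
Proof. intros [_ [Hzero _]]. now apply Hzero. Qed.

Lemma ball_open {T : Type} (d : T -> T -> R) (x : T) (r : R) :
  is_metric d -> metric_open d (fun z => d x z < r).
Proof.
  intros [_ [_ [_ Htri]]] z Hz.
  exists (r - d x z). split; [lra|].
  intros w Hw. pose proof (Htri x z w). lra.
Qed.

Section ProductMetric.

Variables (X Y : Type) (dX : X -> X -> R) (dY : Y -> Y -> R)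
  (d : X * Y -> X * Y -> R).
Hypotheses (MX : is_metric dX) (MY : is_metric dY).
Hypothesis Hpres : partial_distance_preserving dX dY d.

Lemma dist_le_sum (Md : is_metric d) (x x' : X) (y y' : Y) :
  d (x, y) (x', y') <= dX x x' + dY y y'.
Proof.
  destruct Md as [_ [_ [_ Htri]]]. destruct Hpres as [PX PY].
  rewrite <- (PX x x' y), <- (PY x' y y'). apply Htri.
Qed.

Hypothesis Hinc : distance_increasing dX dY d.

(* Lower bound in the first coordinate: compare (y,y) with (y,y'). *)
Lemma distX_le_dist (x x' : X) (y y' : Y) : dX x x' <= d (x, y) (x', y').
Proof.
  destruct Hpres as [PX _]. rewrite <- (PX x x' y).
  apply Hinc; [lra|]. rewrite (metric_refl dY y MY). apply MY.
Qed.

(* Lower bound in the second coordinate: compare (x,x) with (x,x'). *)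
Lemma distY_le_dist (x x' : X) (y y' : Y) : dY y y' <= d (x, y) (x', y').
Proof.
  destruct Hpres as [_ PY]. rewrite <- (PY x y y').
  apply Hinc; [|lra]. rewrite (metric_refl dX x MX). apply MX.
Qed.

(* Every d-open set is open in the product topology: inside a d-ball of
   radius eps lies the rectangle of coordinate balls of radius eps/2. *)
Lemma metric_open_product_open (Md : is_metric d) (W : X * Y -> Prop) :
  metric_open d W -> product_open dX dY W.
Proof.
  intros HW [x y] Hp.
  destruct (HW _ Hp) as [eps [Heps Hball]].
  exists (fun z => dX x z < eps / 2), (fun z => dY y z < eps / 2); simpl.
  rewrite (metric_refl dX x MX), (metric_refl dY y MY).
  repeat split; try apply ball_open; try assumption; try lra.
  intros x' y' Hx Hy. apply Hball.
  pose proof (dist_le_sum Md x x' y y'). lra.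
Qed.

(* Every product-open set is d-open: a d-ball of radius min e1 e2 lies in
   the rectangle of coordinate balls of radii e1 and e2. *)
Lemma product_open_metric_open (W : X * Y -> Prop) :
  product_open dX dY W -> metric_open d W.
Proof.
  intros HW [x y] Hp.
  destruct (HW _ Hp) as [U [V [HU [HV [Ux [Vy Hrect]]]]]]; simpl in Ux, Vy.
  destruct (HU _ Ux) as [e1 [He1 Hball1]].
  destruct (HV _ Vy) as [e2 [He2 Hball2]].
  exists (Rmin e1 e2). split; [now apply Rmin_pos|].
  intros [x' y'] Hq. pose proof (Rmin_l e1 e2). pose proof (Rmin_r e1 e2).
  apply Hrect.
  - apply Hball1. pose proof (distX_le_dist x x' y y'). lra.
  - apply Hball2. pose proof (distY_le_dist x x' y y'). lra.
Qed.

End ProductMetric.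

Theorem corollary3p5 (X Y : Type) (dX : X -> X -> R) (dY : Y -> Y -> R)
  (d : X * Y -> X * Y -> R) :
  is_metric dX -> is_metric dY -> is_metric d ->
  distance_increasing dX dY d -> partial_distance_preserving dX dY d ->
  forall W : X * Y -> Prop, metric_open d W <-> product_open dX dY W.
Proof.
  intros MX MY Md Hinc Hpres W. split.
  - now apply metric_open_product_open.
  - now apply product_open_metric_open.
Qed.
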